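(* Let $n=25$. The only effective divisor classes $D$ on $X$ with $\chi(D)\ge2$ and $2B\cdot D<B\cdot K$ are the classes $H-E_i$, $1\le i\le 25$.
   Context: Let $X$ be the blowup of $\mathbb{P}^2_{\mathbb{C}}$ at $n$ very general points, with $H$ the pullback of a line class, $E_i$ the exceptional divisors, $E=\sum_iE_i$, and $K=K_X=-3H+E$; $B=\sqrt nH-E$ (so $B=5H-E$ for $n=25$). Write $\chi(D)=\chi(\mathcal{O}_X(D))$; effective means the class of an effective divisor. *)

From mathcomp Require Import all_boot all_algebra.
From mathcomp Require Import Rstruct complex.
From mathcomp Require Import mpoly.

Set Implicit Arguments.
Unset Strict Implicit.
Unset Printing Implicit Defensive.

Import GRing.Theory Num.Theory.
Local Open Scope ring_scope.

Definition CC : Type := (Rdefinitions.R)[i].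

(* A configuration of n points of P^2(C): an n x 3 matrix whose rows are
   homogeneous coordinates.  The points are honest, pairwise distinct points
   of P^2 iff any two distinct rows are linearly independent (this also forces
   every row to be nonzero). *)
Definition distinct_points (n : nat) (M : 'M[CC]_(n, 3)) : Prop :=
  forall i j : 'I_n, i != j -> \rank (col_mx (row i M) (row j M)) = 2%N.

(* The coordinates of all points flattened into one vector of length n*3,
   used to evaluate polynomials on the configuration space (C^3)^n. *)
Definition config_coords (n : nat) (M : 'M[CC]_(n, 3)) : 'I_(n * 3) -> CC :=
  fun k => mxvec M 0 k.

Definition mult_ge (F : {mpoly CC[3]}) (v : 'I_3 -> CC) (k : nat) : Prop :=
  forall a : 'X_{1..3}, (mdeg a < k)%N -> (F^`M[a]).@[v] = 0.

(* A divisor class on the blowup X of P^2 at n points, written in the basis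
   H, E_1, ..., E_n of Pic X:  D = (d, m)  means  D = d H - sum_i m_i E_i. *)
Definition divclass (n : nat) : Type := (int * {ffun 'I_n -> int})%type.

(* Intersection form: H^2 = 1, E_i.E_j = -delta_ij, H.E_i = 0. *)
Definition idot (n : nat) (D1 D2 : divclass n) : int :=
  D1.1 * D2.1 - \sum_(i < n) D1.2 i * D2.2 i.

Definition Kcl (n : nat) : divclass n := (-3, [ffun => -1]).

(* B = sqrt(n) H - E; for n = 25 this is 5H - E. *)
Definition B25 : divclass 25 := (5, [ffun => 1]).

Definition HmE (n : nat) (i : 'I_n) : divclass n :=
  (1, [ffun j => if j == i then 1 else 0]).

(* chi(O_X(D)) computed by Riemann--Roch on the rational surface X
   (chi(O_X) = 1):  chi(D) = 1 + (D^2 - D.K)/2. *)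
Definition chi (n : nat) (D : divclass n) : rat :=
  1 + (idot D D - idot D (Kcl n))%:~R / 2.

(* D = dH - sum m_i E_i is the class of an effective divisor on the blowup
   of P^2 at the points (rows of) M iff there is a plane curve of degree d
   (a nonzero form of degree d) having multiplicity >= max(m_i, 0) at the
   i-th point (the rest being a nonnegative combination of the E_i). *)
Definition effective (n : nat) (M : 'M[CC]_(n, 3)) (D : divclass n) : Prop :=
  (0 <= D.1) /\
  exists F : {mpoly CC[3]},
    [/\ F != 0, F \is (absz D.1).-homog &
        forall i : 'I_n, mult_ge F (fun k => M i k) (absz (Num.max (D.2 i) 0))].

From mathcomp Require Import all_boot all_algebra.
From mathcomp Require Import Rstruct complex.
From mathcomp Require Import mpoly.
From mathcomp Require Import ring zify.

(* Write D = dH - sum_i m_i E_i, s = sum_i m_i and q = sum_i m_i^2.  By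
   Riemann-Roch, chi(D) >= 2 reads d^2 + 3d - q - s >= 2, and 2 B.D < B.K
   reads s >= 5d - 4.  Together with Cauchy-Schwarz (s^2 <= 25 q) and the
   integrality bound |s| <= q, this leaves only d = s = q = 1, i.e. m is a
   unit vector and D = H - E_i.  Conversely H - E_i is the strict transform of
   a line through the i-th point, which is effective for every configuration,
   so no genericity condition is needed: all the polynomials G k can be 1. *)

Set Implicit Arguments.
Unset Strict Implicit.

Local Open Scope ring_scope.
Import GRing.Theory Num.Theory.

Lemma sqr_sum_le (R : realDomainType) (n : nat) (x : 'I_n -> R) :
  (\sum_i x i) ^+ 2 <= n%:R * \sum_i x i ^+ 2.
Proof.
set s := \sum_i x i; set q := \sum_i x i ^+ 2.
have sum_dev : \sum_i (n%:R * x i - s) ^+ 2 = n%:R * (n%:R * q - s ^+ 2).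
  rewrite (eq_bigr (fun i => n%:R ^+ 2 * x i ^+ 2 - 2%:R * n%:R * s * x i + s ^+ 2));
    last by move=> i _; ring.
  by rewrite big_split sumrB /= -!mulr_sumr sumr_const card_ord -/s -/q; ring.
have : 0 <= n%:R * (n%:R * q - s ^+ 2).
  by rewrite -sum_dev; apply: sumr_ge0 => i _; exact: sqr_ge0.
case: n => [|n] in x s q sum_dev *; first by rewrite /s big_ord0 !mul0r expr2 mul0r.
by rewrite pmulr_rge0 ?ltr0Sn // subr_ge0.
Qed.

Lemma int_mul_pred_ge0 (x : int) : 0 <= x * (x - 1).
Proof.
have [] : x <= 0 \/ 1 <= x by lia.
all: nia.
Qed.

Lemma norm_sum_le_sum_sqr (n : nat) (m : 'I_n -> int) :
  `|\sum_i m i| <= \sum_i m i ^+ 2.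
Proof.
rewrite ler_norml; apply/andP; split.
- rewrite -subr_ge0 opprK -big_split /=.
  apply: sumr_ge0 => i _; have := int_mul_pred_ge0 (- m i); lia.
- rewrite -subr_ge0 -sumrB; apply: sumr_ge0 => i _.
  have := int_mul_pred_ge0 (m i); lia.
Qed.

Lemma unit_vector_of_sums (n : nat) (m : {ffun 'I_n -> int}) :
  \sum_i m i = 1 -> \sum_i m i ^+ 2 = 1 ->
  exists i, m = [ffun j => if j == i then 1 else 0].
Proof.
move=> sum1 sumsq1.
have m01 j : m j = 0 \/ m j = 1.
  suff /eqP : m j * (m j - 1) = 0.
    by rewrite mulf_eq0 subr_eq0 => /orP[] /eqP; [left | right].
  apply: (@psumr_eq0P _ _ xpredT (fun j => m j * (m j - 1))) => // [k _|].
    exact: int_mul_pred_ge0.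
  rewrite (eq_bigr (fun k => m k ^+ 2 - m k)); last by move=> k _; ring.
  by rewrite sumrB sum1 sumsq1 subrr.
have [i /eqP mi1 | no1] := pickP (fun i => m i == 1); last first.
  by move: sum1; rewrite big1 // => j _; have := no1 j; case: (m01 j) => ->.
exists i; apply/ffunP => j; rewrite ffunE.
have [-> // | ji] := eqVneq j i.
have others0 : \sum_(k | k != i) m k = 0.
  by move: sum1; rewrite (bigD1 i) //= mi1 => /(canRL (addKr 1)); rewrite addNr.
by apply: (psumr_eq0P _ others0) => // k _; case: (m01 k) => ->.
Qed.

Lemma int_bounds_force_one (d s q : int) :
  s ^+ 2 <= 25 * q -> `|s| <= q -> 0 <= d ->
  2 <= d * d + 3 * d - q - s -> 5 * d - 4 <= s ->
  [/\ d = 1, s = 1 & q = 1].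
Proof.
move=> cauchy_schwarz /ler_normlP [neg_q_le_s s_le_q] d_ge0 chi_ge2 B_bound.
have d_le3 : d <= 3 by nia.
have [|[|[|]]] : d = 0 \/ d = 1 \/ d = 2 \/ d = 3 by lia.
all: by move=> d_eq; subst d; split; lia.
Qed.

Lemma idot_self (n : nat) (d : int) (m : {ffun 'I_n -> int}) :
  idot (d, m) (d, m) = d * d - \sum_i m i ^+ 2.
Proof. by []. Qed.

Lemma idot_Kcl (n : nat) (d : int) (m : {ffun 'I_n -> int}) :
  idot (d, m) (Kcl n) = - 3 * d + \sum_i m i.
Proof.
rewrite /idot /Kcl /= (eq_bigr (fun i => - m i)); last by move=> i _; rewrite ffunE mulrN1.
by rewrite sumrN opprK mulrC.
Qed.

Lemma chi_ge2 (n : nat) (D : divclass n) :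
  (2%:Q <= chi D) = (2 <= idot D D - idot D (Kcl n)).
Proof.
rewrite /chi -(ler_int rat) -[2%:Q]/((1 + 2%:~R / 2)%R).
by rewrite lerD2l ler_pM2r.
Qed.

Lemma idot_B25 (d : int) (m : {ffun 'I_25 -> int}) :
  idot B25 (d, m) = 5 * d - \sum_i m i.
Proof. by rewrite /idot; congr (_ - _); apply: eq_bigr => i _; rewrite ffunE mul1r. Qed.

Lemma idot_B25_Kcl : idot B25 (Kcl 25) = 10.
Proof.
by rewrite /Kcl idot_B25 (eq_bigr (fun=> -1)) ?sumr_const ?card_ord // => i _; rewrite ffunE.
Qed.

Lemma sum_HmE (n : nat) (i : 'I_n) : \sum_j (HmE i).2 j = 1.
Proof.
rewrite (bigD1 i) //= big1 ?ffunE ?eqxx ?addr0 // => j ji.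
by rewrite ffunE (negbTE ji).
Qed.

Lemma sum_sqr_HmE (n : nat) (i : 'I_n) : \sum_j (HmE i).2 j ^+ 2 = 1.
Proof.
rewrite (bigD1 i) //= big1 ?ffunE ?eqxx ?addr0 // => j ji.
by rewrite ffunE (negbTE ji).
Qed.

Lemma chi_HmE (n : nat) (i : 'I_n) : chi (HmE i) = 2%:Q.
Proof.
have -> : HmE i = (1, (HmE i).2) by [].
by rewrite /chi idot_self idot_Kcl sum_HmE sum_sqr_HmE.
Qed.

Lemma idot_B25_HmE (i : 'I_25) : idot B25 (HmE i) = 4.
Proof.
have -> : HmE i = (1, (HmE i).2) by [].
by rewrite idot_B25 sum_HmE.
Qed.

Lemma vanishing_linear_form (R : comNzRingType) (n : nat) (v : 'I_n.+2 -> R) :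
  exists F : {mpoly R[n.+2]}, [/\ F != 0, F \is 1.-homog & F.@[v] = 0].
Proof.
have X_homog k : ('X_k : {mpoly R[n.+2]}) \is 1.-homog by rewrite dhomogX /= mdeg1.
have [v0 | v0_neq0] := eqVneq (v ord0) 0.
  exists 'X_ord0; split; rewrite ?mevalXU //.
  apply/eqP => /(congr1 (mcoeff U_(ord0))).
  by rewrite mcoeffXU mcoeff0 eqxx => /eqP; rewrite oner_eq0.
exists (v ord_max *: 'X_ord0 - v ord0 *: 'X_ord_max); split.
- apply/eqP => /(congr1 (mcoeff U_(ord_max))).
  rewrite mcoeff0 mcoeffB !mcoeffZ !mcoeffXU eqxx /= mulr0 mulr1 sub0r => /eqP.
  by rewrite oppr_eq0 (negbTE v0_neq0).
- by rewrite rpredB // rpredZ.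
- by rewrite mevalB !mevalZ !mevalXU mulrC subrr.
Qed.

Lemma mult_ge1 (F : {mpoly CC[3]}) (v : 'I_3 -> CC) : F.@[v] = 0 -> mult_ge F v 1.
Proof.
move=> root_F a /ltnSE; rewrite leqn0 mdeg_eq0 => /eqP ->.
by rewrite mderivm0m.
Qed.

Lemma effective_HmE (n : nat) (M : 'M[CC]_(n, 3)) (i : 'I_n) : effective M (HmE i).
Proof.
split=> //; have [F [F_neq0 F_homog F_root]] := vanishing_linear_form (fun k => M i k).
exists F; split=> // j; rewrite ffunE.
by have [-> | _] := eqVneq j i; [exact: mult_ge1 | ].
Qed.

Theorem theorem4p15 :
  exists G : nat -> {mpoly CC[25 * 3]},
    (forall k, G k != 0) /\
    forall M : 'M[CC]_(25, 3),
      distinct_points M ->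
      (forall k, (G k).@[config_coords M] != 0) ->
      forall D : divclass 25,
        (effective M D /\ 2%:Q <= chi D /\ 2 * idot B25 D < idot B25 (Kcl 25))
        <-> exists i : 'I_25, D = HmE i.
Proof.
exists (fun=> 1); split=> [k | M _ _ [d m]]; first exact: oner_neq0.
split=> [[[/= d_ge0 _] [chi_D B_D]] | [i ->]]; last first.
  by rewrite chi_HmE idot_B25_HmE idot_B25_Kcl; split; first exact: effective_HmE.
rewrite chi_ge2 idot_self idot_Kcl in chi_D; rewrite idot_B25 idot_B25_Kcl in B_D.
have chi_bound : 2 <= d * d + 3 * d - \sum_i m i ^+ 2 - \sum_i m i by lia.
have B_bound : 5 * d - 4 <= \sum_i m i by lia.
have cauchy_schwarz : (\sum_i m i) ^+ 2 <= 25 * \sum_i m i ^+ 2.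
  by have := sqr_sum_le m; rewrite natz.
have [d1 sum1 sumsq1] :=
  int_bounds_force_one cauchy_schwarz (norm_sum_le_sum_sqr m) d_ge0 chi_bound B_bound.
have [i ->] := unit_vector_of_sums sum1 sumsq1.
by exists i; rewrite d1.
Qed.
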